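(* Let $\{\Delta_1,\dots,\Delta_r\}$ be a nef-partition of a reflexive polytope $\Delta$ with dual nef-partition $\{\nabla_1,\dots,\nabla_r\}$, let $i\in J\subset I=\{1,\dots,r\}$. Then a nonzero lattice point $w\in M$ lies in the relative interior of $\Delta_i+\sum_{j\in J}\Delta_j$ (where $\Delta_i$ appears twice) if and only if $w\in\Delta_i^0$ and $0$ lies in the relative interior of $\sum_{j\notin J}\nabla_j(w)$ (an empty sum being $\{0\}$). Moreover, in this case $$\dim\Big(\Delta_i+\sum_{j\in J}\Delta_j\Big)+\dim\Big(\sum_{j\notin J}\nabla_j(w)\Big)=d.$$
   Context: Let $M\cong\mathbb Z^d$, $N=\mathrm{Hom}(M,\mathbb Z)$, $\langle\cdot,\cdot\rangle$ the pairing. A $d$-dimensional lattice polytope $\Delta\subset M_{\mathbb R}$ is reflexive if $\Delta=\{x:\langle x,e_k\rangle\ge-1,\ k=1,\dots,n\}$ with $e_k\in N$ the primitive inward facet normals. A nef-partition is a Minkowski decomposition $\Delta=\Delta_1+\dots+\Delta_r$ into lattice polytopes with $\varphi_j(e_k)\in\{0,1\}$ for all $j,k$, $\varphi_j(y)=-\min_{x\in\Delta_j}\langle x,y\rangle$; the dual nef-partition consists of $\nabla_j=\mathrm{Conv}(\{0\}\cup\{e_k:\varphi_j(e_k)=1\})\subset N_{\mathbb R}$, and $\nabla^*=\mathrm{Conv}(\Delta_1\cup\dots\cup\Delta_r)$ is a reflexive polytope. Put $\mathcal V(\nabla^* )=\partial\nabla^*\cap M$ and $\Delta_i^0=\Delta_i\cap\mathcal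 V(\nabla^* )$. For $w\in M$, $\nabla_j(w)$ denotes the face of $\nabla_j$ on which $\langle w,\cdot\rangle$ attains its minimum. *)

(* points of M_R = R^d (and of N_R) are row vectors 'rV[R]_d,
   R : realType.  M and N = Hom(M,Z) are both identified with Z^d via a basis
   and its dual basis, so that <x,y> = sum_k x_k y_k. *)
From HB Require Import structures.
From mathcomp Require Import all_boot all_order all_algebra.
From mathcomp Require Import reals.
Set Implicit Arguments. Unset Strict Implicit. Unset Printing Implicit Defensive.
Import Order.TTheory GRing.Theory Num.Theory.
Local Open Scope ring_scope.

Section Polytopes.
Variables (R : realType) (d : nat).
Local Notation vec := 'rV[R]_d.

Definition pset := vec -> Prop.

Definition pairing (x y : vec) : R := \sum_(k < d) x 0 k * y 0 k.

Definition lattice (x : vec) : Prop := forall k, x 0 k \is a Num.int.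

Definition primitive (e : vec) : Prop :=
  lattice e /\ forall t : R, 0 < t -> t < 1 -> ~ lattice (t *: e).

Definition conv (V : seq vec) : pset := fun x =>
  exists l : 'I_(size V) -> R, (forall i, 0 <= l i) /\ \sum_i l i = 1 /\
    x = \sum_i l i *: nth 0 V i.

Definition lattice_polytope (P : pset) : Prop :=
  exists V : seq vec, (forall v, v \in V -> lattice v) /\ forall x, P x <-> conv V x.

Definition msum2 (P Q : pset) : pset := fun x => exists p q, P p /\ Q q /\ x = p + q.
Definition msum (Ps : seq pset) : pset := foldr msum2 (fun x => x = 0) Ps.

Definition aff (P : pset) : pset := fun x =>
  exists (n : nat) (p : 'I_n -> vec) (l : 'I_n -> R),
    (forall i, P (p i)) /\ \sum_i l i = 1 /\ x = \sum_i l i *: p i.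

Definition ball (x : vec) (eps : R) : pset := fun y =>
  forall k, `|y 0 k - x 0 k| < eps.

Definition interior (P : pset) : pset := fun x =>
  exists2 eps : R, 0 < eps & forall y, ball x eps y -> P y.
Definition boundary (P : pset) : pset := fun x => P x /\ ~ interior P x.
Definition relint (P : pset) : pset := fun x =>
  P x /\ exists2 eps : R, 0 < eps & forall y, aff P y -> ball x eps y -> P y.

(* affine dimension: P has dimension n iff n is the maximal number m such that
   P contains m+1 affinely independent points p_0,...,p_m (i.e. the rank of the
   matrix with rows p_i - p_0 equals m). *)
Definition diffmx (m : nat) (p : 'I_m.+1 -> vec) : 'M[R]_(m, d) :=
  \matrix_(i < m, k < d) (p (lift ord0 i) 0 k - p ord0 0 k).
Definition affdim (P : pset) (n : nat) : Prop :=
  (exists p : 'I_n.+1 -> vec, (forall i, P (p i)) /\ \rank (diffmx p) = n) /\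
  (forall (m : nat) (p : 'I_m.+1 -> vec), (forall i, P (p i)) -> (\rank (diffmx p) <= n)%N).

(* phi_P(y) = c, where phi_P(y) = - min_{x in P} <x,y> *)
Definition phi_eq (P : pset) (y : vec) (c : R) : Prop :=
  (forall x, P x -> - c <= pairing x y) /\ (exists2 x, P x & pairing x y = - c).

Definition minface (P : pset) (w : vec) : pset := fun y =>
  P y /\ forall z, P z -> pairing w y <= pairing w z.

(* reflexive polytope with primitive inward facet normals e_1..e_n:
   P is a d-dimensional lattice polytope, P = {x : <x,e_k> >= -1 for all k},
   the e_k are pairwise distinct primitive lattice vectors, and each
   {x in P : <x,e_k> = -1} is a facet (of dimension d-1). *)
Definition reflexive_with_normals (P : pset) (e : seq vec) : Prop :=
  [/\ lattice_polytope P, affdim P d,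
      (forall x, P x <-> forall k, k \in e -> - 1 <= pairing x k),
      uniq e &
      forall k, k \in e ->
        primitive k /\ affdim (fun x => P x /\ pairing x k = - 1) d.-1].

Definition nef_partition (P : pset) (e : seq vec) (r : nat) (D : 'I_r -> pset) : Prop :=
  [/\ forall j, lattice_polytope (D j),
      (forall x, P x <-> msum [seq D j | j <- enum 'I_r] x) &
      forall j k, k \in e -> phi_eq (D j) k 0 \/ phi_eq (D j) k 1].

(* dual nef-partition: nabla_j = Conv({0} u {e_k : phi_j(e_k) = 1}) *)
Definition nabla (e : seq vec) (r : nat) (D : 'I_r -> pset) (j : 'I_r) : pset :=
  fun y => exists (l0 : R) (l : 'I_(size e) -> R),
    0 <= l0 /\ (forall k, 0 <= l k) /\ l0 + \sum_k l k = 1 /\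
    (forall k, l k != 0 -> phi_eq (D j) (nth 0 e k) 1) /\
    y = \sum_k l k *: nth 0 e k.

(* nabla^* = Conv(D_1 u ... u D_r) *)
Definition nabla_star (r : nat) (D : 'I_r -> pset) : pset := fun x =>
  exists (n : nat) (p : 'I_n -> vec) (l : 'I_n -> R),
    (forall i, exists j, D j (p i)) /\ (forall i, 0 <= l i) /\
    \sum_i l i = 1 /\ x = \sum_i l i *: p i.

(* Delta_i^0 = Delta_i n V(nabla-star), V(nabla-star) = boundary(nabla-star) n M *)
Definition Dzero (r : nat) (D : 'I_r -> pset) (i : 'I_r) : pset := fun x =>
  D i x /\ boundary (nabla_star D) x /\ lattice x.

End Polytopes.

From Pilot Require Import Defs.
From HB Require Import structures.
From mathcomp Require Import all_boot all_order all_algebra.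
From mathcomp Require Import boolp reals ring lra.
Import Order.TTheory GRing.Theory Num.Theory.
Local Open Scope ring_scope.
Set Implicit Arguments. Unset Strict Implicit. Unset Printing Implicit Defensive.

(* Every polyhedron in sight is cut out by half-spaces with normals in e.
   Separating a point from Delta_j and minimising the separating functional
   over Delta at a vertex, Farkas' lemma gives
   Delta_j = {x : <x,e_k> >= -phi_j(e_k)}, hence
   A := Delta_i + sum_{j in J} Delta_j = {x : <x,e_k> >= -phi_A(e_k)} with
   phi_A = phi_i + sum_{j in J} phi_j.  A point of such a polyhedron lies in its
   relative interior iff the normals tight at it are positively dependent.
   For w in relint A, integrality of <w,e_k> and phi_J <= 1 force w in Delta_i,
   and a nonzero lattice point of Delta_i lies on the boundary of nabla^*,
   since otherwise all <w,e_k> >= 0 and the ray R_+ w would stay in Delta.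
   For w in Delta_i the normals tight at w for A are the e_k with <w,e_k> = 0
   and phi_j(e_k) = 1 for some j outside J, i.e. the vertices of the faces
   nabla_j(w), and B = sum_{j notin J} nabla_j(w) is a neighbourhood of 0 in
   their span exactly when they are positively dependent.  Then aff A is w plus
   the orthogonal complement of this span and aff B is the span itself, so the
   two dimensions add up to d. *)

Local Notation "<< x , y >>" := (pairing x y).

Section Pairing.
Variables (R : realType) (n : nat).
Local Notation vec := 'rV[R]_n.

Lemma pairingC (x y : vec) : <<x, y>> = <<y, x>>.
Proof. by apply: eq_bigr => k _; rewrite mulrC. Qed.

Lemma pairingDl (x y z : vec) : <<x + y, z>> = <<x, z>> + <<y, z>>.
Proof. by rewrite /pairing -big_split; apply: eq_bigr => k _; rewrite mxE mulrDl. Qed.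

Lemma pairingZl a (x z : vec) : <<a *: x, z>> = a * <<x, z>>.
Proof. by rewrite /pairing mulr_sumr; apply: eq_bigr => k _; rewrite mxE mulrA. Qed.

Lemma pairingNl (x z : vec) : <<- x, z>> = - <<x, z>>.
Proof. by rewrite -scaleN1r pairingZl mulN1r. Qed.

Lemma pairingBl (x y z : vec) : <<x - y, z>> = <<x, z>> - <<y, z>>.
Proof. by rewrite pairingDl pairingNl. Qed.

Lemma pairing0l (z : vec) : <<0, z>> = 0.
Proof. by rewrite /pairing big1 // => k _; rewrite mxE mul0r. Qed.

Lemma pairingZr a (x z : vec) : <<z, a *: x>> = a * <<z, x>>.
Proof. by rewrite !(pairingC z) pairingZl. Qed.

Lemma pairingNr (x z : vec) : <<z, - x>> = - <<z, x>>.
Proof. by rewrite !(pairingC z) pairingNl. Qed.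

Lemma pairingBr (x y z : vec) : <<z, x - y>> = <<z, x>> - <<z, y>>.
Proof. by rewrite !(pairingC z) pairingBl. Qed.

Lemma pairing0r (z : vec) : <<z, 0>> = 0.
Proof. by rewrite pairingC pairing0l. Qed.

Lemma pairing_suml I (s : seq I) (P : pred I) (F : I -> vec) y :
  <<\sum_(i <- s | P i) F i, y>> = \sum_(i <- s | P i) <<F i, y>>.
Proof.
elim/big_rec2: _ => [|i a b _ IH]; first exact: pairing0l.
by rewrite pairingDl IH.
Qed.

Lemma pairing_sumr I (s : seq I) (P : pred I) (F : I -> vec) y :
  <<y, \sum_(i <- s | P i) F i>> = \sum_(i <- s | P i) <<y, F i>>.
Proof. by rewrite pairingC pairing_suml; apply: eq_bigr => i _; exact: pairingC. Qed.

Lemma pairing_self_gt0 (b : vec) : b != 0 -> 0 < <<b, b>>.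
Proof.
move=> bn0; have [k bk] : exists k, b 0 k != 0.
  apply/existsP; apply: contraR bn0; rewrite negb_exists => /forallP b0.
  by apply/eqP/matrixP => i j; rewrite mxE (ord1 i); exact/eqP/negPn/b0.
rewrite /pairing (bigD1 k) //= -expr2.
apply: ltr_wpDr; first by apply: sumr_ge0 => j _; rewrite -expr2 sqr_ge0.
by rewrite lt_def sqrf_eq0 bk sqr_ge0.
Qed.

Lemma pairing_row_mx n1 n2 (z : 'rV[R]_(n1 + n2)) (u : 'rV_n1) (v : 'rV_n2) :
  <<z, row_mx u v>> = <<lsubmx z, u>> + <<rsubmx z, v>>.
Proof.
rewrite /pairing big_split_ord; congr (_ + _); apply: eq_bigr => k _.
  by rewrite row_mxEl mxE.
by rewrite row_mxEr mxE.
Qed.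

End Pairing.

Definition ord_cons (T : Type) m (c : T) (l : 'I_m -> T) (k : 'I_m.+1) : T :=
  if unlift ord0 k is Some k' then l k' else c.

Lemma ord_cons0 T m (c : T) (l : 'I_m -> T) : ord_cons c l ord0 = c.
Proof. by rewrite /ord_cons unlift_none. Qed.

Lemma ord_consS T m (c : T) (l : 'I_m -> T) (k : 'I_m) : ord_cons c l (lift ord0 k) = l k.
Proof. by rewrite /ord_cons liftK. Qed.

Section Farkas.
Variables (R : realType) (n : nat).
Local Notation vec := 'rV[R]_n.

Definition in_cone m (a : 'I_m -> vec) (b : vec) :=
  exists2 l : 'I_m -> R, (forall k, 0 <= l k) & b = \sum_k l k *: a k.

Definition farkas_cert m (a : 'I_m -> vec) (b z : vec) :=
  (forall k, 0 <= <<z, a k>>) /\ <<z, b>> < 0.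

Section Projection.
Variables (m : nat) (a : 'I_m.+1 -> vec) (z : vec).
Let a0 := a ord0.

(* Projection onto the hyperplane <z,.> = 0 along a0, scaled by <z,a0>. *)
Definition proj_along (v : vec) : vec := <<z, a0>> *: v - <<z, v>> *: a0.

Lemma farkas_cert_proj b z' :
  farkas_cert (proj_along \o (a \o lift ord0)) (proj_along b) z' ->
  farkas_cert a b (<<z, a0>> *: z' - <<z', a0>> *: z).
Proof.
rewrite /proj_along => -[z'a z'b]; split=> [k|].
  case: (unliftP ord0 k) => [k' ->|->].
    move: (z'a k') => /=; rewrite pairingBl !pairingZl pairingBr !pairingZr.
    by rewrite [<<z', a0>> * _]mulrC.
  by rewrite pairingBl !pairingZl -/a0 mulrC subrr.
move: z'b; rewrite pairingBl !pairingZl pairingBr !pairingZr.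
by rewrite [<<z', a0>> * _]mulrC.
Qed.

Hypotheses (za : forall k, 0 <= <<z, a (lift ord0 k)>>) (za0 : <<z, a0>> < 0).

Lemma in_cone_proj b : <<z, b>> < 0 ->
  in_cone (proj_along \o (a \o lift ord0)) (proj_along b) -> in_cone a b.
Proof.
move=> zb [mu mu0 Eb]; rewrite /proj_along /= in Eb.
have aln0 : <<z, a0>> != 0 by rewrite ltr0_neq0.
set al := <<z, a0>> in Eb aln0 *.
set s := \sum_k mu k * <<z, a (lift ord0 k)>>.
pose c0 := (<<z, b>> - s) / al.
exists (ord_cons c0 mu) => [k|].
  case: (unliftP ord0 k) => [k' ->|->]; rewrite ?ord_consS ?ord_cons0 //.
  rewrite /c0 mulr_le0 ?invr_le0 ?(ltW za0) // subr_le0.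
  by apply: le_trans (ltW zb) _; apply: sumr_ge0 => q _; apply: mulr_ge0.
rewrite big_ord_recl ord_cons0.
under [X in _ = _ + X]eq_bigr do rewrite ord_consS.
apply: (scalerI aln0); rewrite scalerDr scalerA /c0 mulrCA mulfV // mulr1.
have -> : al *: b = <<z, b>> *: a0 + \sum_k mu k *: (al *: a (lift ord0 k) -
    <<z, a (lift ord0 k)>> *: a0) by rewrite -Eb addrC subrK.
rewrite scalerBl -addrA; congr (_ + _).
rewrite scaler_sumr /s scaler_suml -sumrN -big_split /=; apply: eq_bigr => k _.
by rewrite scalerBr !scalerA addrC [al * _]mulrC.
Qed.

End Projection.

(* Fourier-Motzkin elimination of one generator at a time. *)
Lemma farkas m (a : 'I_m -> vec) b : in_cone a b \/ exists z, farkas_cert a b z.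
Proof.
elim: m a b => [|m IH] a b.
  case: (eqVneq b 0) => [->|bn0].
    by left; exists (fun=> 0) => //; rewrite big_ord0.
  right; exists (- b); split => [[]// |].
  by rewrite pairingNl oppr_lt0 pairing_self_gt0.
case: (IH (a \o lift ord0) b) => [[l l0 ->]|[z [za zb]]].
  left; exists (ord_cons 0 l) => [k|].
    by case: (unliftP ord0 k) => [k' ->|->]; rewrite ?ord_consS ?ord_cons0.
  by rewrite big_ord_recl ord_cons0 scale0r add0r; apply: eq_bigr => k _; rewrite ord_consS.
case: (lerP 0 <<z, a ord0>>) => za0.
  by right; exists z; split=> // k; case: (unliftP ord0 k) => [k' ->|->] //; apply: za.
case: (IH (proj_along a z \o (a \o lift ord0)) (proj_along a z b)).
  by move/(in_cone_proj za za0 zb); left.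
by case=> z' /farkas_cert_proj cert; right; exists (<<z, a ord0>> *: z' - <<z', a ord0>> *: z).
Qed.

End Farkas.

Section Separation.
Variables (R : realType) (d : nat).
Local Notation vec := 'rV[R]_d.

Definition convT (T : finType) (p : T -> vec) : pset R d := fun x =>
  exists l : T -> R, (forall t, 0 <= l t) /\ \sum_t l t = 1 /\ x = \sum_t l t *: p t.

Lemma sum_enum_val (V : nmodType) (T : finType) (F : T -> V) :
  \sum_(t < #|T|) F (enum_val t) = \sum_u F u.
Proof. by rewrite (reindex enum_val (onW_bij _ (enum_val_bij T))). Qed.

Lemma sum_enum (V : nmodType) (T : finType) (F : T -> V) :
  \sum_(t <- enum T) F t = \sum_t F t.
Proof. by rewrite big_enum; apply: eq_bigl => t; rewrite inE. Qed.

(* Farkas' lemma applied to the homogenised points (p t, 1). *)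
Lemma conv_separation (T : finType) (p : T -> vec) x :
  ~ convT p x -> exists y, forall t, <<x, y>> < <<p t, y>>.
Proof.
move=> nx; pose one : 'rV[R]_1 := const_mx 1.
pose a (t : 'I_#|T|) := row_mx (p (enum_val t)) one.
case: (farkas a (row_mx x one)) => [[l l0 Eb]|[z [za zb]]].
  exfalso; apply: nx; exists (fun u => l (enum_rank u)); split => //; split.
    have := congr1 (fun M : 'rV_(d + 1) => M 0 (rshift d ord0)) Eb.
    rewrite row_mxEr mxE summxE => ->; rewrite -(sum_enum_val (fun u => l (enum_rank u))).
    by apply: eq_bigr => t _; rewrite enum_valK mxE row_mxEr mxE mulr1.
  apply/matrixP => i k; rewrite (ord1 i).
  have := congr1 (fun M : 'rV_(d + 1) => M 0 (lshift 1 k)) Eb.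
  rewrite row_mxEl => ->; rewrite !summxE -(sum_enum_val (fun u => (l (enum_rank u) *: p u) 0 k)).
  by apply: eq_bigr => t _; rewrite enum_valK !mxE (unsplitK (inl _ k)).
exists (lsubmx z) => t; rewrite pairingC [<<p t, _>>]pairingC.
have := za (enum_rank t); rewrite /a enum_rankK pairing_row_mx => zt.
move: zb; rewrite pairing_row_mx => zb.
by rewrite -(ltrD2r <<rsubmx z, one>>); apply: lt_le_trans zb zt.
Qed.

End Separation.

Section MinkowskiSum.
Variables (R : realType) (d : nat).
Local Notation vec := 'rV[R]_d.
Local Notation pset := (pset R d).

Lemma msum_sum (I : eqType) (s : seq I) (F : I -> pset) (g : I -> vec) :
  (forall j, j \in s -> F j (g j)) -> msum (map F s) (\sum_(j <- s) g j).
Proof.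
elim: s => [|j s IH] Fg /=; first by rewrite big_nil.
rewrite big_cons; exists (g j), (\sum_(j <- s) g j); split; first by apply: Fg; exact: mem_head.
by split => //; apply: IH => j' sj'; apply: Fg; rewrite inE sj' orbT.
Qed.

Lemma msum_decomp (I : eqType) (s : seq I) (F : I -> pset) x :
  uniq s -> msum (map F s) x ->
  exists g : I -> vec, (forall j, j \in s -> F j (g j)) /\ x = \sum_(j <- s) g j.
Proof.
elim: s x => [|j s IH] x /=.
  by move=> _ ->; exists (fun _ => 0); rewrite big_nil.
case/andP => js us [p [q [Fp [Mq ->]]]].
have [g [Fg ->]] := IH q us Mq.
exists (fun j' => if j' == j then p else g j'); split.
  by move=> j'; rewrite inE; case: eqP => [->|_] //=; exact: Fg.
rewrite big_cons eqxx; congr (_ + _); apply: eq_big_seq => j' sj'.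
by case: eqP => // E; rewrite -E sj' in js.
Qed.

Lemma msum_ind (I : eqType) (s : seq I) (F : I -> pset) (Q : vec -> Prop) :
  Q 0 -> (forall x y, Q x -> Q y -> Q (x + y)) ->
  (forall j x, j \in s -> F j x -> Q x) -> forall x, msum (map F s) x -> Q x.
Proof.
move=> Q0 QD; elim: s => [|j s IH] FQ x /=; first by move->.
case=> [p [q [Fp [Mq ->]]]]; apply: QD; first by apply: (FQ j) => //; exact: mem_head.
by apply: IH => // j' y sj'; apply: FQ; rewrite inE sj' orbT.
Qed.

Lemma msum1 (P : pset) x : msum [:: P] x <-> P x.
Proof.
split; first by move=> [p [q [Pp [-> ->]]]]; rewrite addr0.
by move=> Px; exists x, 0; rewrite addr0.
Qed.

Lemma phi_eq_msum (I : eqType) (s : seq I) (F : I -> pset) k (c : I -> R) :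
  (forall j, j \in s -> phi_eq (F j) k (c j)) ->
  phi_eq (msum (map F s)) k (\sum_(j <- s) c j).
Proof.
elim: s => [|j s IH] Fc /=.
  rewrite big_nil; split; first by move=> x ->; rewrite pairing0l oppr0.
  by exists 0; rewrite ?pairing0l ?oppr0.
have [F1 [x1 Fx1 E1]] := Fc j (mem_head _ _).
have [F2 [x2 Fx2 E2]] := IH (fun j' sj' => Fc j' (introT orP (or_intror sj'))).
rewrite big_cons; split.
  move=> x [p [q [Fp [Mq ->]]]]; rewrite pairingDl opprD.
  by apply: lerD; [apply: F1|apply: F2].
by exists (x1 + x2); [exists x1, x2|rewrite pairingDl E1 E2 opprD].
Qed.

Lemma phi_eq_uniq (P : pset) k c1 c2 : phi_eq P k c1 -> phi_eq P k c2 -> c1 = c2.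
Proof.
move=> [P1 [x1 Px1 E1]] [P2 [x2 Px2 E2]]; apply: le_anti; apply/andP; split.
  by have := P2 _ Px1; rewrite E1 lerN2.
by have := P1 _ Px2; rewrite E2 lerN2.
Qed.

Lemma phi_eq_ext (P Q : pset) k c : (forall x, P x <-> Q x) -> phi_eq P k c -> phi_eq Q k c.
Proof.
move=> PQ [Pc [x Px Ex]]; split; first by move=> y /PQ; apply: Pc.
by exists x => //; apply/PQ.
Qed.

Lemma msum2_convT (T1 T2 : finType) (p1 : T1 -> vec) (p2 : T2 -> vec) x :
  msum2 (convT p1) (convT p2) x <-> convT (fun u : T1 * T2 => p1 u.1 + p2 u.2) x.
Proof.
split.
  move=> [y1 [y2 [[l1 [l10 [l11 ->]]] [[l2 [l20 [l21 ->]]] ->]]]].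
  exists (fun u => l1 u.1 * l2 u.2); split; first by move=> u; apply: mulr_ge0.
  split.
    rewrite -(pair_big xpredT xpredT (fun a b => l1 a * l2 b)) /=.
    by rewrite -[RHS]l11; apply: eq_bigr => a _; rewrite -mulr_sumr l21 mulr1.
  rewrite -(pair_big xpredT xpredT (fun a b => (l1 a * l2 b) *: (p1 a + p2 b))) /=.
  under [RHS]eq_bigr do under eq_bigr do rewrite scalerDr.
  under [RHS]eq_bigr do rewrite big_split /=; rewrite big_split /=; congr (_ + _).
    by apply: eq_bigr => a _; rewrite -scaler_suml -mulr_sumr l21 mulr1.
  rewrite exchange_big; apply: eq_bigr => b _.
  by rewrite -scaler_suml -mulr_suml l11 mul1r.
move=> [l [l0 [l1 ->]]].
exists (\sum_u l u *: p1 u.1), (\sum_u l u *: p2 u.2); split; last split.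
- exists (fun a => \sum_b l (a, b)); split; first by move=> a; apply: sumr_ge0.
  split; first by rewrite pair_big -l1; apply: eq_bigr => -[].
  rewrite [LHS](eq_bigr (fun u => l (u.1, u.2) *: p1 u.1)); last by case.
  rewrite -(pair_big xpredT xpredT (fun a b => l (a, b) *: p1 a)) /=.
  by apply: eq_bigr => a _; rewrite scaler_suml.
- exists (fun b => \sum_a l (a, b)); split; first by move=> b; apply: sumr_ge0.
  split; first by rewrite exchange_big pair_big -l1; apply: eq_bigr => -[].
  rewrite [LHS](eq_bigr (fun u => l (u.1, u.2) *: p2 u.2)); last by case.
  rewrite -(pair_big xpredT xpredT (fun a b => l (a, b) *: p2 b)) /=.
  by rewrite exchange_big; apply: eq_bigr => b _; rewrite scaler_suml.
- by rewrite -big_split /=; apply: eq_bigr => u _; rewrite scalerDr.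
Qed.

Lemma msum_convT (I : eqType) (s : seq I) (F : I -> pset) :
  (forall j, exists (T : finType) (p : T -> vec), forall x, F j x <-> convT p x) ->
  exists (T : finType) (p : T -> vec), forall x, msum (map F s) x <-> convT p x.
Proof.
move=> FT; elim: s => [|j s [T [p Tp]]] /=.
  exists 'I_1, (fun _ => 0) => x; split.
    by move->; exists (fun _ => 1); rewrite !big_ord1 scaler0.
  by move=> [l [_ [_ ->]]]; rewrite big_ord1 scaler0.
have [T1 [p1 Tp1]] := FT j.
exists (T1 * T)%type, (fun u => p1 u.1 + p u.2) => x.
rewrite -msum2_convT; split.
  by move=> [y1 [y2 [F1 [M2 ->]]]]; exists y1, y2; split; [exact/Tp1|split; [exact/Tp|]].
by move=> [y1 [y2 [F1 [M2 ->]]]]; exists y1, y2; split; [exact/Tp1|split; [exact/Tp|]].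
Qed.

End MinkowskiSum.

Section Estimates.
Variable R : realType.

Lemma pos_lower_bound (T : finType) (P : pred T) (f : T -> R) :
  (forall t, P t -> 0 < f t) -> exists2 eps : R, 0 < eps & forall t, P t -> eps <= f t.
Proof.
move=> f0; exists (\big[Num.min/1]_(t | P t) f t).
  by apply: (big_ind (fun x => 0 < x)) => // x y x0 y0; rewrite lt_min x0 y0.
by move=> t Pt; rewrite (bigD1 t) //= ge_min lexx.
Qed.

Lemma pos_perturb (T : finType) (P : pred T) (a b : T -> R) :
  (forall t, P t -> 0 < a t) -> exists2 s : R, 0 < s & forall t, P t -> 0 < a t + s * b t.
Proof.
move=> a0.
have [s s0 sle] := pos_lower_bound (f := fun t => a t / (1 + `|b t|)) (fun t Pt =>
  divr_gt0 (a0 t Pt) (ltr_pwDl ltr01 (normr_ge0 _))).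
exists s => // t Pt; have := sle t Pt; have := a0 t Pt.
have : - (s * `|b t|) <= s * b t.
  by rewrite -mulrN ler_wpM2l ?(ltW s0) // lerNl -normrN ler_norm.
set nb := `|b t|; have nb0 : 0 <= nb by exact: normr_ge0.
move=> sb at0 sle'.
have : s * nb <= a t / (1 + nb) * nb by rewrite ler_wpM2r.
have : a t / (1 + nb) * nb < a t.
  by rewrite mulrAC ltr_pdivrMr ?ltr_pwDl ?ltr01 // mulrDr mulr1 ltrDr.
lra.
Qed.

Lemma small_mx m n (K : 'M[R]_(m, n)) eps : 0 < eps ->
  exists2 t : R, 0 < t & forall l q, t * `|K l q| < eps.
Proof.
move=> e0; pose S := \sum_l \sum_q `|K l q|.
have S0 : 0 <= S by apply: sumr_ge0 => *; apply: sumr_ge0.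
exists (eps / (1 + S)); first by apply: divr_gt0; lra.
move=> l q; have : `|K l q| <= S.
  rewrite /S (bigD1 l) //= (bigD1 q) //= -addrA lerDl.
  by apply: addr_ge0; apply: sumr_ge0 => *; [|apply: sumr_ge0].
by move=> KS; rewrite mulrAC ltr_pdivrMr; nra.
Qed.

Lemma convex_comb_ge (T : finType) (l f : T -> R) c :
  (forall t, 0 <= l t) -> \sum_t l t = 1 -> (forall t, c <= f t) -> c <= \sum_t l t * f t.
Proof.
move=> l0 l1 cf; rewrite -[c]mul1r -l1 mulr_suml; apply: ler_sum => t _.
by rewrite ler_wpM2l.
Qed.

Lemma convex_comb_gt (T : finType) (l f : T -> R) c :
  (forall t, 0 <= l t) -> \sum_t l t = 1 -> (forall t, c < f t) -> c < \sum_t l t * f t.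
Proof.
move=> l0 l1 cf.
have [t lt] : exists t, 0 < l t.
  apply: contrapT => nl; move: l1; rewrite big1 => [/eqP|t _]; first by rewrite eq_sym oner_eq0.
  by apply/eqP; rewrite eq_le l0 andbT leNgt; apply/negP => lt; apply: nl; exists t.
rewrite -[c]mul1r -l1 mulr_suml -subr_gt0 -sumrB (bigD1 t) //=.
apply: ltr_wpDr; first by apply: sumr_ge0 => u _; rewrite -mulrBr mulr_ge0 // subr_ge0 ltW.
by rewrite -mulrBr mulr_gt0 // subr_gt0 cf.
Qed.

Lemma int_lt_addr1 (x y : R) : x \is a Num.int -> y \is a Num.int -> x < y -> x + 1 <= y.
Proof.
move=> /intrP [m ->] /intrP [n ->]; rewrite ltr_int => mn.
have -> : m%:~R + 1 = (m + 1)%:~R :> R by rewrite intrD.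
by rewrite ler_int -ltzD1 ltrD2r.
Qed.

Variable d : nat.
Local Notation vec := 'rV[R]_d.

Lemma pairing_int (x k : vec) : lattice x -> lattice k -> <<x, k>> \is a Num.int.
Proof. by move=> lx lk; apply: rpred_sum => q _; apply: rpredM. Qed.

Lemma ball_pairing (x y k : vec) eps : ball x eps y ->
  `|<<y, k>> - <<x, k>>| <= eps * \sum_q `|k 0 q|.
Proof.
move=> xy; rewrite -pairingBl /pairing mulr_sumr.
apply: le_trans (ler_norm_sum _ _ _) _; apply: ler_sum => q _.
by rewrite normrM ler_wpM2r // !mxE; apply: ltW; apply: xy.
Qed.

Lemma small_vec (u : vec) eps : 0 < eps -> exists2 t : R, 0 < t & forall q, t * `|u 0 q| < eps.
Proof. by move=> /(small_mx u) [t t0 ut]; exists t => // q; exact: ut. Qed.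

End Estimates.

Section AffineHull.
Variables (R : realType) (d : nat).
Local Notation vec := 'rV[R]_d.

Lemma aff_line (A : pset R d) x y a : A x -> A y -> aff A (a *: x + (1 - a) *: y).
Proof.
move=> Ax Ay; exists 2, (fun i => if i == ord0 then x else y).
exists (fun i => if i == ord0 then a else 1 - a); split; first by move=> i; case: ifP.
by rewrite !big_ord_recl !big_ord0 /= !addr0 addrC subrK.
Qed.

Lemma aff_pairing (A : pset R d) k c y :
  (forall x, A x -> <<x, k>> = c) -> aff A y -> <<y, k>> = c.
Proof.
move=> Ac [n [p [l [Ap [l1 ->]]]]]; rewrite pairing_suml.
under eq_bigr do rewrite pairingZl Ac //.
by rewrite -mulr_suml l1 mul1r.
Qed.

(* Move slightly beyond w, away from x. *)
Lemma relint_tight_eq (A : pset R d) w k alpha : relint A w ->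
  (forall x, A x -> alpha <= <<x, k>>) -> <<w, k>> = alpha ->
  forall x, A x -> <<x, k>> = alpha.
Proof.
move=> [Aw [eps e0 Aball]] Ak wk x Ax.
have [t t0 tsmall] := small_vec (w - x) e0.
have Ay : A ((1 + t) *: w + (1 - (1 + t)) *: x).
  apply: Aball; first exact: aff_line.
  move=> q; rewrite !mxE.
  have -> : (1 + t) * w 0 q + (1 - (1 + t)) * x 0 q - w 0 q = t * (w 0 q - x 0 q) by ring.
  by have := tsmall q; rewrite !mxE normrM gtr0_norm.
have := Ak _ Ay; rewrite pairingDl !pairingZl wk.
by have := Ak _ Ax; move=> xk yk; apply/eqP; rewrite eq_le xk andbT; nra.
Qed.

Lemma mulmx_ball_bound n m (P : 'M[R]_(n, m)) : exists2 C : R, 0 < C &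
  forall (y : 'rV[R]_n) eps, 0 <= eps -> ball 0 eps y -> forall k, `|(y *m P) 0 k| <= C * eps.
Proof.
pose C := 1 + \sum_k \sum_q `|P q k|.
have PC k : \sum_q `|P q k| <= C.
  rewrite /C (bigD1 k) //= addrCA lerDl addr_ge0 //.
  by apply: sumr_ge0 => *; apply: sumr_ge0.
exists C => [|y eps e0 yb k].
  suff : 0 <= \sum_k \sum_q `|P q k| by rewrite /C; lra.
  by apply: sumr_ge0 => *; apply: sumr_ge0.
rewrite mxE; apply: le_trans (ler_norm_sum _ _ _) _.
apply: le_trans (_ : \sum_q eps * `|P q k| <= _).
  apply: ler_sum => q _; rewrite normrM ler_wpM2r //.
  by apply: ltW; have := yb q; rewrite mxE subr0.
by rewrite -mulr_sumr mulrC ler_wpM2r.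
Qed.

Lemma mxrank_kermx_tr m (M : 'M[R]_(m, d)) : (\rank (kermx M^T) + \rank M)%N = d.
Proof. by rewrite mxrank_ker mxrank_tr subnK // rank_leq_col. Qed.

Lemma affdim_nbhd (S : pset R d) (p : vec) m (U : 'M[R]_(m, d)) eps :
  0 < eps -> (forall y, (y <= U)%MS -> ball 0 eps y -> S (p + y)) ->
  (forall x y, S x -> S y -> (y - x <= U)%MS) -> affdim S (\rank U).
Proof.
move=> e0 Snbhd Sdiff.
have [K KU rK] : exists2 K : 'M_(\rank U, d), (K <= U)%MS & \rank K = \rank U.
  by exists (row_base U); rewrite eq_row_base.
have [t t0 tK] := small_mx K e0.
have Stv v : (v <= U)%MS -> (forall q, `|v 0 q| < eps) -> S (p + v).
  by move=> vU vsmall; apply: Snbhd => // q; rewrite mxE subr0.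
split.
  exists (ord_cons p (fun l => p + t *: row l K)); split.
    move=> u; case: (unliftP ord0 u) => [l ->|->]; rewrite ?ord_consS ?ord_cons0.
      apply: Stv; first by rewrite scalemx_sub // (submx_trans (row_sub l _)).
      by move=> q; rewrite !mxE normrM (gtr0_norm t0); exact: tK.
    by rewrite -[p]addr0; apply: Stv => [|q]; rewrite ?sub0mx // mxE normr0.
  have -> : Defs.diffmx (ord_cons p (fun l => p + t *: row l K)) = t *: K.
    by apply/matrixP => l q; rewrite !mxE ord_consS ord_cons0 !mxE addrAC subrr add0r.
  by rewrite (eqmx_scale _ (lt0r_neq0 t0)).
move=> m' q Sq; apply: mxrankS; apply/row_subP => a.
have -> : row a (Defs.diffmx q) = q (lift ord0 a) - q ord0 by apply/rowP => k; rewrite !mxE.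
exact: Sdiff.
Qed.

End AffineHull.

Definition facet_normal (R : realType) d (e : seq 'rV[R]_d) (k : 'I_(size e)) := nth 0 e k.
Arguments facet_normal {R d} e k.

Lemma facet_normal_mem (R : realType) d (e : seq 'rV[R]_d) k : facet_normal e k \in e.
Proof. exact: mem_nth. Qed.

Lemma facet_normalP (R : realType) d (e : seq 'rV[R]_d) k :
  k \in e -> exists kk, facet_normal e kk = k.
Proof. by case/(nthP 0) => n ns <-; exists (Ordinal ns). Qed.

Section HPolyhedron.
Variables (R : realType) (d : nat) (e : seq 'rV[R]_d).
Local Notation vec := 'rV[R]_d.
Local Notation E := (facet_normal e).
Local Notation idx := 'I_(size e).

Definition pos_dependent (P : pred idx) := exists lam : idx -> R,
  [/\ forall k, P k -> 0 < lam k, forall k, ~~ P k -> lam k = 0 & \sum_k lam k *: E k = 0].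

Definition masked (P : pred idx) k : vec := if P k then E k else 0.

Lemma cone_pos_dependent (P : pred idx) :
  (forall k, P k -> in_cone (masked P) (- E k)) -> pos_dependent P.
Proof.
move=> Pcone.
have Mex kk : exists mu : idx -> R, P kk ->
    (forall k, 0 <= mu k) /\ - E kk = \sum_k mu k *: masked P k.
  by case: (boolP (P kk)) => [/Pcone [mu mu0 Emu]|_]; [exists mu|exists (fun _ => 0)].
have [M HM] := choice Mex.
exists (fun k => if P k then 1 + \sum_(kk | P kk) M kk k else 0); split.
- move=> k Pk; rewrite Pk.
  suff : 0 <= \sum_(kk | P kk) M kk k by lra.
  by apply: sumr_ge0 => kk Pkk; have [M0 _] := HM kk Pkk.
- by move=> k /negPf ->.
- transitivity (\sum_k (masked P k + \sum_(kk | P kk) M kk k *: masked P k)).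
    apply: eq_bigr => k _; rewrite /masked; case: (P k).
      by rewrite scalerDl scale1r scaler_suml.
    by rewrite scale0r big1 ?addr0 // => kk _; rewrite scaler0.
  rewrite big_split /= exchange_big /=.
  under [X in _ + X = _]eq_bigr => kk Pkk do have [_ <-] := HM kk Pkk.
  by rewrite sumrN -big_mkcond /= subrr.
Qed.

Variables (A : pset R d) (c : vec -> R) (w : vec).
Hypothesis HA : forall x, A x <-> forall k, k \in e -> - c k <= <<x, k>>.
Hypothesis Aw : A w.

Definition tight (k : idx) := <<w, E k>> == - c (E k).

Lemma slack_gt0 k : ~~ tight k -> 0 < <<w, E k>> + c (E k).
Proof.
move=> ntk; have := (HA w).1 Aw _ (facet_normal_mem k); rewrite -subr_ge0 opprK => sl.
by rewrite lt_def sl andbT; apply: contra ntk; rewrite /tight addr_eq0.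
Qed.

Lemma slack_nbhd : exists2 eps : R, 0 < eps & forall y, ball w eps y ->
  forall k, ~~ tight k -> - c (E k) < <<y, E k>>.
Proof.
have [eps e0 epsP] := pos_lower_bound (P := fun k => ~~ tight k)
  (f := fun k => (<<w, E k>> + c (E k)) / (1 + \sum_q `|E k 0 q|))
  (fun k ntk => divr_gt0 (slack_gt0 ntk) (ltr_pwDl ltr01 (sumr_ge0 _ (fun q _ => normr_ge0 _)))).
exists eps => // y wy k ntk.
have := ball_pairing (E k) wy; have := epsP k ntk.
set S := \sum_q `|E k 0 q|; have S0 : 0 <= S by apply: sumr_ge0.
have sl := slack_gt0 ntk => epsS.
have : eps * S < <<w, E k>> + c (E k).
  apply: le_lt_trans (_ : (<<w, E k>> + c (E k)) / (1 + S) * S < _).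
    by rewrite ler_wpM2r.
  by rewrite mulrAC ltr_pdivrMr ?ltr_pwDl // mulrDr mulr1 ltr_pwDl.
by rewrite ler_norml => ? /andP[? _]; nra.
Qed.

Lemma feasible_direction z : (forall k, tight k -> 0 <= <<z, E k>>) ->
  exists2 s : R, 0 < s & A (w + s *: z).
Proof.
move=> zt.
have [s s0 sP] := pos_perturb (P := fun k => ~~ tight k) (pairing z \o E)
  (fun k ntk => slack_gt0 ntk).
exists s => //; apply/HA => k ke; have [kk <-] := facet_normalP ke.
rewrite pairingDl pairingZl.
case tk : (tight kk); last by have /= := sP kk (negbT tk); lra.
by have := zt kk tk; rewrite (eqP tk); nra.
Qed.

Lemma pos_dependent_tight_eq : pos_dependent tight ->
  forall x, A x -> forall k, tight k -> <<x, E k>> = - c (E k).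
Proof.
move=> [lam [lpos lzero lsum]] x Ax.
have slack_ge0 k : 0 <= lam k * (<<x, E k>> + c (E k)).
  case tk : (tight k); last by rewrite lzero ?tk // mul0r.
  apply: mulr_ge0; first exact: ltW (lpos k tk).
  by have := (HA x).1 Ax _ (facet_normal_mem k); lra.
have lam_pairing (y : vec) : \sum_k lam k * <<y, E k>> = 0.
  by rewrite -[RHS](pairing0r y) -lsum pairing_sumr; apply: eq_bigr => k _; rewrite pairingZr.
have slack_sum : \sum_k lam k * (<<x, E k>> + c (E k)) = 0.
  under eq_bigr do rewrite mulrDr.
  rewrite big_split /= lam_pairing add0r -[RHS]oppr0 -[in RHS](lam_pairing w) -sumrN.
  apply: eq_bigr => k _; case tk : (tight k); first by rewrite (eqP tk) mulrN opprK.
  by rewrite lzero ?tk // !mul0r oppr0.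
move=> k tk; have /eqP := psumr_eq0P (fun k _ => slack_ge0 k) slack_sum (i := k) isT.
rewrite mulf_eq0 => /orP [/eqP l0|/eqP sl0]; first by have := lpos k tk; rewrite l0 ltxx.
by apply/eqP; rewrite -subr_eq0 opprK sl0.
Qed.

Lemma pos_dependent_relint : pos_dependent tight -> relint A w.
Proof.
move=> dep; split => //; have [eps e0 epsP] := slack_nbhd; exists eps => // y Ay wy.
apply/HA => k ke; have [kk <-] := facet_normalP ke.
case tk : (tight kk); last by apply: ltW; apply: epsP => //; rewrite tk.
by rewrite (aff_pairing (c := - c (E kk)) _ Ay) // => x Ax; apply: pos_dependent_tight_eq.
Qed.

Lemma relint_pos_dependent : relint A w -> pos_dependent tight.
Proof.
move=> Aint; apply: cone_pos_dependent => kk tkk.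
case: (farkas (masked tight) (- E kk)) => [//|[z [zt zkk]]]; exfalso.
have zkk' : 0 < <<z, E kk>> by move: zkk; rewrite pairingNr oppr_lt0.
have [s s0 Az] : exists2 s : R, 0 < s & A (w + s *: z).
  by apply: feasible_direction => k tk; have := zt k; rewrite /masked tk.
have := relint_tight_eq Aint (fun x Ax => (HA x).1 Ax _ (facet_normal_mem kk)) (eqP tkk) Az.
rewrite pairingDl pairingZl (eqP tkk); nra.
Qed.

Lemma argmin_in_cone y : (forall u, A u -> <<w, y>> <= <<u, y>>) ->
  in_cone (masked tight) y.
Proof.
move=> wmin; case: (farkas (masked tight) y) => [//|[z [zt zy]]]; exfalso.
have [s s0 Az] : exists2 s : R, 0 < s & A (w + s *: z).
  by apply: feasible_direction => k tk; have := zt k; rewrite /masked tk.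
have := wmin _ Az; rewrite pairingDl pairingZl; nra.
Qed.

End HPolyhedron.

Section NefPartition.
Variables (R : realType) (d : nat) (Delta : pset R d) (e : seq 'rV[R]_d)
  (r : nat) (D : 'I_r -> pset R d).
Hypothesis HR : reflexive_with_normals Delta e.
Hypothesis HN : nef_partition Delta e D.
Local Notation vec := 'rV[R]_d.
Local Notation E := (facet_normal e).

(* phi_{Delta_j}(k), which is 0 or 1 for k in e; elsewhere a junk value. *)
Definition phiD j k : R := if `[< phi_eq (D j) k 1 >] then 1 else 0.

Lemma phiD_phi_eq j k : k \in e -> phi_eq (D j) k (phiD j k).
Proof. by rewrite /phiD; case: asboolP => // nphi ke; have [_ _ /(_ j k ke) []] := HN. Qed.

Lemma phiD_ge0 j k : 0 <= phiD j k.
Proof. by rewrite /phiD; case: asboolP. Qed.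

Lemma phiD_le1 j k : phiD j k <= 1.
Proof. by rewrite /phiD; case: asboolP. Qed.

Lemma phiD01 j k : phiD j k = 0 \/ phiD j k = 1.
Proof. by rewrite /phiD; case: asboolP; [right|left]. Qed.

Lemma phiD1P j k : reflect (phi_eq (D j) k 1) (phiD j k == 1).
Proof.
by rewrite /phiD; case: asboolP => phi; [rewrite eqxx; left|rewrite eq_sym oner_eq0; right].
Qed.

Lemma Delta_halfspaces x : Delta x <-> forall k, k \in e -> - 1 <= <<x, k>>.
Proof. by have [_ _ ->] := HR. Qed.

Lemma Delta_msum x : Delta x <-> msum [seq D j | j <- enum 'I_r] x.
Proof. by have [_ ->] := HN. Qed.

Lemma D_convT j : exists (T : finType) (p : T -> vec), forall x, D j x <-> convT p x.
Proof.
have [/(_ j) [V [_ HV]] _ _] := HN.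
by exists 'I_(size V), (fun t : 'I_(size V) => nth 0 V t) => x; exact: HV.
Qed.

Lemma e_lattice k : k \in e -> lattice k.
Proof. by move=> ke; have [_ _ _ _ /(_ k ke) [[]]] := HR. Qed.

Lemma sum_phiD k : k \in e -> \sum_j phiD j k = 1.
Proof.
move=> ke; have phi1 : phi_eq Delta k 1.
  split; first by move=> x /Delta_halfspaces; apply.
  have [_ _ _ _ /(_ k ke) [_ [[p [Fp _]] _]]] := HR.
  by have [? ?] := Fp ord0; exists (p ord0).
apply: phi_eq_uniq phi1; rewrite -sum_enum.
apply: (phi_eq_ext (P := msum [seq D j | j <- enum 'I_r])) => [x|].
  by rewrite Delta_msum.
by apply: phi_eq_msum => j _; apply: phiD_phi_eq.
Qed.

Lemma phiD_other j j' k : k \in e -> j != j' -> phiD j k = 1 -> phiD j' k = 0.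
Proof.
move=> ke jj' phij; have := sum_phiD ke; rewrite (bigD1 j) //= phij.
have : phiD j' k <= \sum_(i | i != j) phiD i k.
  by rewrite (bigD1 j') 1?eq_sym //= lerDl; apply: sumr_ge0 => *; apply: phiD_ge0.
by have := phiD_ge0 j' k; lra.
Qed.

Lemma Delta_argmin y : exists2 v, Delta v & forall u, Delta u -> <<v, y>> <= <<u, y>>.
Proof.
have [[V [_ HV]] [[p [Dp _]] _] _ _ _] := HR.
have [l [_ [l1 _]]] := (HV (p ord0)).1 (Dp ord0).
have [t0 _] : exists t0 : 'I_(size V), True.
  case: (size V) l l1 => [|n] l l1; last by exists ord0.
  by move: l1; rewrite big_ord0 => /eqP; rewrite eq_sym oner_eq0.
case: (arg_minP (fun t : 'I_(size V) => <<nth 0 V t, y>>) (P := xpredT) (i0 := t0) isT).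
move=> tm _ tmin.
exists (nth 0 V tm).
  apply/HV; exists (fun t => (t == tm)%:R); split; first by move=> t; case: eqP.
  split; first by rewrite (bigD1 tm) //= eqxx big1 ?addr0 // => t /negPf ->.
  by rewrite (bigD1 tm) //= eqxx scale1r big1 ?addr0 // => t /negPf ->; rewrite scale0r.
move=> u /HV [l' [l0 [l1' ->]]]; rewrite pairing_suml.
by under eq_bigr do rewrite pairingZl; apply: convex_comb_ge => // t; exact: tmin.
Qed.

(* The slacks <g_j,k> + phi_j(k) are nonnegative and sum to <v,k> + 1 = 0. *)
Lemma tight_msum_parts v (g : 'I_r -> vec) k :
  k \in e -> v = \sum_j g j -> (forall j, D j (g j)) -> <<v, k>> = - 1 ->
  forall j, <<g j, k>> = - phiD j k.
Proof.
move=> ke vE Dg vk.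
have slack_ge0 j : 0 <= <<g j, k>> + phiD j k.
  by have [phij _] := phiD_phi_eq j ke; rewrite -lerBlDr sub0r; apply: phij.
have slack_sum : \sum_j (<<g j, k>> + phiD j k) = 0.
  by rewrite big_split /= sum_phiD // -pairing_suml -vE vk addNr.
move=> j; apply/eqP; rewrite -subr_eq0 opprK; apply/eqP.
exact: (psumr_eq0P (fun j _ => slack_ge0 j) slack_sum).
Qed.

Definition phi_sum (s : seq 'I_r) k := \sum_(j <- s) phiD j k.

(* Separate x from the polytope sum_{j in s} Delta_j by y, minimise <.,y> over
   Delta at v = sum_j g_j: then y lies in the cone of facet normals tight at v,
   and on these normals sum_{j in s} g_j meets its lower bound, so it is not
   farther than x in direction y. *)
Lemma halfspaces_sub_msum s x :
  (forall k, k \in e -> - phi_sum s k <= <<x, k>>) -> msum (map D s) x.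
Proof.
move=> xs; apply: contrapT => nx.
have [T [p Tp]] := msum_convT s D_convT.
have [y xy] : exists y, forall t, <<x, y>> < <<p t, y>> by apply: conv_separation => /Tp.
have [v Dv vmin] := Delta_argmin y.
have [lam lam0 yE] := argmin_in_cone (c := fun _ => 1) Delta_halfspaces Dv vmin.
have [g [Dg vE]] := msum_decomp (enum_uniq 'I_r) ((Delta_msum v).1 Dv).
have Dg' j : D j (g j) by apply: Dg; rewrite mem_enum.
have vE' : v = \sum_j g j by rewrite vE sum_enum.
have /Tp [l [l0 [l1 aE]]] := msum_sum (fun j _ => Dg' j) (s := s).
have : <<x, y>> < <<\sum_(j <- s) g j, y>>.
  by rewrite aE pairing_suml; under eq_bigr do rewrite pairingZl; exact: convex_comb_gt.
apply/negP; rewrite -leNgt yE !pairing_sumr; apply: ler_sum => k _.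
rewrite !pairingZr ler_wpM2l // /masked; case tk : (tight _ _ k); last by rewrite !pairing0r.
rewrite pairing_suml.
under eq_bigr do rewrite (tight_msum_parts _ vE' Dg' (eqP tk)) ?facet_normal_mem //.
by rewrite sumrN; apply: xs; exact: facet_normal_mem.
Qed.

Lemma msum_halfspaces s x :
  msum (map D s) x <-> forall k, k \in e -> - phi_sum s k <= <<x, k>>.
Proof.
split=> [sx k ke|]; last exact: halfspaces_sub_msum.
by have [+ _] := phi_eq_msum (F := D) (fun j _ => phiD_phi_eq j ke) (s := s); apply.
Qed.

Lemma D_halfspaces j x : D j x <-> forall k, k \in e -> - phiD j k <= <<x, k>>.
Proof.
by rewrite -msum1 (msum_halfspaces [:: j]) /phi_sum; under eq_forall do rewrite big_seq1.
Qed.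

Lemma nabla_star_halfspaces x : nabla_star D x -> forall k, k \in e -> - 1 <= <<x, k>>.
Proof.
move=> [n [p [l [Dp [l0 [l1 ->]]]]]] k ke.
rewrite pairing_suml; under eq_bigr do rewrite pairingZl.
apply: convex_comb_ge => // t; have [j Dj] := Dp t.
by have := (D_halfspaces j (p t)).1 Dj k ke; have := phiD_le1 j k; lra.
Qed.

Lemma Delta_bounded q : exists M : R, forall x, Delta x -> `|x 0 q| <= M.
Proof.
have [[V [_ HV]] _ _ _ _] := HR.
exists (\sum_(t < size V) `|nth 0 V t 0 q|) => x /HV [l [l0 [l1 ->]]].
rewrite summxE; apply: le_trans (ler_norm_sum _ _ _) _; apply: ler_sum => t _.
rewrite mxE normrM ger0_norm // ler_piMl //.
by rewrite -l1 (bigD1 t) //= lerDl sumr_ge0.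
Qed.

(* Otherwise the ray R_+ w would lie in the bounded set Delta. *)
Lemma Delta_recession w : (forall k, k \in e -> 0 <= <<w, k>>) -> w = 0.
Proof.
move=> wk; apply/matrixP => a q; rewrite (ord1 a) mxE; apply/eqP; apply: contraT => wq.
have [M Mq] := Delta_bounded q.
have sw s : 0 <= s -> s * `|w 0 q| <= M.
  move=> s0; have := Mq (s *: w); rewrite mxE normrM ger0_norm //; apply.
  by apply/Delta_halfspaces => k ke; rewrite pairingZl; have := wk k ke; nra.
have wq0 : 0 < `|w 0 q| by rewrite normr_gt0.
have M0 : 0 <= M by have := sw 0 (lexx 0); rewrite mul0r.
have := sw ((M + 1) / `|w 0 q|); rewrite divr_ge0 ?addr_ge0 // => /(_ isT).
by rewrite mulrAC -mulrA mulfV ?mulr1 ?gt_eqF //; lra.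
Qed.

Lemma nabla_star_interior_ge0 w : lattice w -> interior (nabla_star D) w ->
  forall k, k \in e -> 0 <= <<w, k>>.
Proof.
move=> lw [eps e0 wint] k ke.
have [t t0 tw] := small_vec w e0.
have : nabla_star D ((1 + t) *: w).
  apply: wint => q; rewrite mxE; have := tw q.
  have -> : (1 + t) * w 0 q - w 0 q = t * w 0 q by ring.
  by rewrite normrM gtr0_norm.
move/nabla_star_halfspaces/(_ k ke); rewrite pairingZl => tk.
have wk : -1 < <<w, k>> by rewrite ltNge; apply/negP => wk; nra.
have m1 : (- 1 : R) \is a Num.int by rewrite rpredN rpred1.
by have := int_lt_addr1 m1 (pairing_int lw (e_lattice ke)) wk; lra.
Qed.

Lemma D_Dzero j w : lattice w -> w != 0 -> D j w -> Dzero D j w.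
Proof.
move=> lw w0 Dw; split => //; split => //; split.
  exists 1, (fun _ => w), (fun _ => 1); split; first by move=> _; exists j.
  by split => //; rewrite !big_ord1 scale1r.
by move=> /(nabla_star_interior_ge0 lw) /Delta_recession w0'; rewrite w0' eqxx in w0.
Qed.

Lemma nabla0 j : nabla e D j 0.
Proof.
exists 1, (fun _ => 0); split => //; split => //; split; first by rewrite big1 ?addr0.
by split => [k|]; [rewrite eqxx|rewrite big1 // => k _; rewrite scale0r].
Qed.

Section Face.
Variables (J : {set 'I_r}) (i : 'I_r) (w : vec).
Hypothesis iJ : i \in J.
Local Notation A := (msum (D i :: [seq D j | j <- enum J])).
Local Notation B := (msum [seq minface (nabla e D j) w | j <- enum (~: J)]).

Definition phiJ k := \sum_(j in J) phiD j k.
Definition phiA k := phiD i k + phiJ k.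

Lemma A_halfspaces x : A x <-> forall k, k \in e -> - phiA k <= <<x, k>>.
Proof.
rewrite -[A x]/(msum (map D (i :: enum J)) x) msum_halfspaces /phi_sum.
by under eq_forall do rewrite big_cons big_enum.
Qed.

Lemma phiJ_bounds k : k \in e -> [/\ 0 <= phiJ k, phiJ k <= 1 & phiD i k <= phiJ k].
Proof.
move=> ke; have phi_ge0 j : 0 <= phiD j k by apply: phiD_ge0.
split; first by apply: sumr_ge0.
  by rewrite -(sum_phiD ke) [X in _ <= X](bigID (mem J)) /= lerDl sumr_ge0.
by rewrite /phiJ (bigD1 i) //= lerDl sumr_ge0.
Qed.

Lemma phiJ_compl k : k \in e -> phiJ k + \sum_(j | j \notin J) phiD j k = 1.
Proof. by move=> ke; rewrite -(sum_phiD ke) [RHS](bigID (mem J)). Qed.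

Lemma A0 : A 0.
Proof.
apply/A_halfspaces => k ke; rewrite pairing0l oppr_le0 /phiA.
by have [? _ _] := phiJ_bounds ke; have := phiD_ge0 i k; lra.
Qed.

Lemma Di_sub_A x : D i x -> A x.
Proof.
move=> Dx; apply/A_halfspaces => k ke; have := (D_halfspaces i x).1 Dx k ke.
by rewrite /phiA; have [? _ _] := phiJ_bounds ke; lra.
Qed.

(* If <w,k> < -phi_i(k), integrality and phi_J(k) <= 1 force <w,k> = -phi_A(k)
   with phi_A(k) >= 1; this equation is then an implicit equation of A, which
   fails at 0. *)
Lemma relint_A_Di : lattice w -> relint A w -> D i w.
Proof.
move=> lw Aint; apply/D_halfspaces => k ke; rewrite leNgt; apply/negP => wk.
have [J0 J1 iJle] := phiJ_bounds ke.
have wA := (A_halfspaces w).1 Aint.1 k ke; rewrite /phiA in wA.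
have phi_int : - phiD i k \is a Num.int.
  by case: (phiD01 i k) => ->; rewrite ?oppr0 ?rpredN ?rpred0 ?rpred1.
have wk1 := int_lt_addr1 (pairing_int lw (e_lattice ke)) phi_int wk.
have [wkE phiA1] : <<w, k>> = - phiA k /\ 1 <= phiA k.
  by rewrite /phiA; case: (phiD01 i k) => phi0; rewrite phi0 in wk1 wA iJle *; split; lra.
have := relint_tight_eq Aint (fun x Ax => (A_halfspaces x).1 Ax k ke) wkE A0.
by rewrite pairing0l; lra.
Qed.

Section Tight.
Hypothesis Dw : D i w.
Local Notation tA := (@tight _ _ e phiA w).

Lemma tightA_spec k : tA k -> <<w, E k>> = 0 /\ exists2 j, j \notin J & phiD j (E k) = 1.
Proof.
move=> /eqP tk; have [J0 J1 iJle] := phiJ_bounds (facet_normal_mem k).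
have := (D_halfspaces i w).1 Dw (E k) (facet_normal_mem k).
rewrite /phiA in tk; have := phiD_ge0 i (E k) => i0 wi.
have phiJ0 : phiJ (E k) = 0 by lra.
split; first by lra.
have := phiJ_compl (facet_normal_mem k); rewrite phiJ0 add0r => sum1.
apply: contrapT => none; move: sum1; rewrite big1 => [/eqP|j jJ]; first by rewrite eq_sym oner_eq0.
by case: (phiD01 j (E k)) => // phi1; case: none; exists j.
Qed.

Lemma tightA_of k j : <<w, E k>> = 0 -> j \notin J -> phiD j (E k) = 1 -> tA k.
Proof.
move=> wk jJ phij; have [J0 J1 iJle] := phiJ_bounds (facet_normal_mem k).
have := phiJ_compl (facet_normal_mem k).
have : phiD j (E k) <= \sum_(j | j \notin J) phiD j (E k).
  by rewrite (bigD1 j) //= lerDl; apply: sumr_ge0 => *; apply: phiD_ge0.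
by have := phiD_ge0 i (E k); rewrite /tight /phiA wk; move=> *; apply/eqP; lra.
Qed.

(* A vertex e_k of nabla_j (j outside J) has phi_j(e_k) = 1, hence phi_i(e_k) = 0
   and <w,e_k> >= 0 since w is in Delta_i. *)
Lemma nabla_vertex_ge0 j k : j \notin J -> phiD j (E k) = 1 -> 0 <= <<w, E k>>.
Proof.
move=> jJ phij; have ji : j != i by apply: contraNneq jJ => ->.
have := (D_halfspaces i w).1 Dw (E k) (facet_normal_mem k).
by rewrite (phiD_other (facet_normal_mem k) ji phij) oppr0.
Qed.

Lemma nabla_ge0 j y : j \notin J -> nabla e D j y -> 0 <= <<w, y>>.
Proof.
move=> jJ [l0 [l [_ [lp [_ [lphi ->]]]]]].
rewrite pairing_sumr; apply: sumr_ge0 => k _; rewrite pairingZr.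
case: (eqVneq (l k) 0) => [->|lk]; first by rewrite mul0r.
by apply: mulr_ge0 => //; apply: nabla_vertex_ge0 jJ _; apply/eqP/phiD1P/lphi.
Qed.

Definition tight_comb (beta : 'I_(size e) -> R) :=
  (forall k, 0 <= beta k) /\ forall k, ~~ tA k -> beta k = 0.

Lemma face_nabla_comb j y : j \notin J -> minface (nabla e D j) w y ->
  exists2 beta, tight_comb beta & y = \sum_k beta k *: E k.
Proof.
move=> jJ [ny ymin].
have wy : <<w, y>> = 0.
  apply/eqP; rewrite eq_le (nabla_ge0 jJ ny) andbT.
  by have := ymin 0 (nabla0 j); rewrite pairing0r.
move: ny wy => [l0 [l [_ [lp [_ [lphi yE]]]]]] wy.
exists l => //; split=> // k; apply: contraNeq => lk.
have phij : phiD j (E k) = 1 by apply/eqP/phiD1P/lphi.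
have lw_ge0 k' : 0 <= l k' * <<w, E k'>>.
  case: (eqVneq (l k') 0) => [->|lk']; first by rewrite mul0r.
  by apply: mulr_ge0 => //; apply: nabla_vertex_ge0 jJ _; apply/eqP/phiD1P/lphi.
have : \sum_k l k * <<w, E k>> = 0.
  by rewrite -[RHS]wy yE pairing_sumr; apply: eq_bigr => k' _; rewrite pairingZr.
move/(psumr_eq0P (fun k _ => lw_ge0 k)) => /(_ k isT) /eqP.
by rewrite mulf_eq0 (negbTE lk) /= => /eqP wk; exact: tightA_of wk jJ phij.
Qed.

Lemma B_comb y : B y -> exists2 beta, tight_comb beta & y = \sum_k beta k *: E k.
Proof.
move: y; apply: (msum_ind (F := fun j => minface (nabla e D j) w) (s := enum (~: J))).
- by exists (fun _ => 0) => //; rewrite big1 // => k _; rewrite scale0r.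
- move=> x1 x2 [b1 [b10 b1t] ->] [b2 [b20 b2t] ->].
  exists (fun k => b1 k + b2 k).
    by split => k; [exact: addr_ge0|move=> ntk; rewrite b1t // b2t // addr0].
  by rewrite -big_split; apply: eq_bigr => k _; rewrite scalerDl.
- by move=> j x; rewrite mem_enum inE; exact: face_nabla_comb.
Qed.

Lemma face_nabla_mem j (beta : 'I_(size e) -> R) : j \notin J -> (forall k, 0 <= beta k) ->
  (forall k, beta k != 0 -> <<w, E k>> = 0 /\ phiD j (E k) = 1) ->
  \sum_k beta k <= 1 -> minface (nabla e D j) w (\sum_k beta k *: E k).
Proof.
move=> jJ b0 bk b1; split.
  exists (1 - \sum_k beta k), beta; split; first by rewrite subr_ge0.
  split => //; split; first by rewrite subrK.
  by split => // k /bk [_ /eqP/phiD1P].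
move=> z nz; apply: le_trans (nabla_ge0 jJ nz); rewrite pairing_sumr.
rewrite big1 // => k _; rewrite pairingZr.
by case: (eqVneq (beta k) 0) => [->|/bk [-> _]]; rewrite ?mul0r ?mulr0.
Qed.

(* The summand nabla_j(w) into which the tight normal e_k is put (i is a dummy). *)
Definition nabla_index k := odflt i [pick j | (j \notin J) && (phiD j (E k) == 1)].

Lemma nabla_indexP k : tA k -> nabla_index k \notin J /\ phiD (nabla_index k) (E k) = 1.
Proof.
move=> tk; have [_ [j jJ phij]] := tightA_spec tk.
rewrite /nabla_index; case: pickP => [j' /= /andP [j'J /eqP phij']|none]; first by [].
by move: (none j); rewrite /= jJ phij eqxx.
Qed.

Lemma tight_comb_B beta : tight_comb beta -> \sum_k beta k <= 1 ->
  B (\sum_k beta k *: E k).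
Proof.
move=> [b0 bt] b1.
pose g j := \sum_k (if nabla_index k == j then beta k else 0) *: E k.
have gB j : j \in enum (~: J) -> minface (nabla e D j) w (g j).
  rewrite mem_enum inE => jJ; apply: face_nabla_mem => //.
  - by move=> k; case: ifP.
  - move=> k; case: (eqVneq (nabla_index k) j) => [<- bk|_]; last by rewrite eqxx.
    have tk : tA k by apply: contraNT bk => /bt ->.
    by have [[wk _] [_ phik]] := (tightA_spec tk, nabla_indexP tk).
  - by apply: le_trans b1; apply: ler_sum => k _; case: ifP.
have := msum_sum (F := fun j => minface (nabla e D j) w) gB; congr (msum _ _).
rewrite big_enum /g exchange_big; apply: eq_bigr => k _ /=.
case tk : (tA k); last by rewrite bt ?tk // scale0r big1 // => j _; case: ifP; rewrite scale0r.
have [jJ _] := nabla_indexP tk.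
rewrite (bigD1 (nabla_index k)) ?inE //= eqxx big1 ?addr0 // => j /andP [_ /negPf].
by rewrite eq_sym => ->; rewrite scale0r.
Qed.

Lemma B0 : B 0.
Proof.
have -> : 0 = \sum_k (fun _ => 0 : R) k *: E k by rewrite big1 // => k _; rewrite scale0r.
by apply: tight_comb_B; [|rewrite big1].
Qed.

(* -t e_k lies in B for small t > 0, so -e_k is a nonnegative combination of
   tight normals. *)
Lemma relint_B_pos_dependent : relint B 0 -> pos_dependent tA.
Proof.
move=> [_ [eps e0 Bint]]; apply: cone_pos_dependent => kk tkk.
have Bk : B (E kk).
  have -> : E kk = \sum_k (k == kk)%:R *: E k.
    by rewrite (bigD1 kk) //= eqxx scale1r big1 ?addr0 // => k /negPf ->; rewrite scale0r.
  apply: tight_comb_B; first by split => k; case: eqP => // ->; rewrite tkk.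
  by rewrite (bigD1 kk) //= eqxx big1 ?addr0 // => k /negPf ->.
have [t t0 tk] := small_vec (E kk) e0.
have [beta [b0 bt] bE] : exists2 beta, tight_comb beta & - t *: E kk = \sum_k beta k *: E k.
  apply: B_comb; apply: Bint; first by have := aff_line (- t) Bk B0; rewrite scaler0 addr0.
  by move=> q; rewrite !mxE subr0 normrM normrN (gtr0_norm t0); exact: tk.
exists (fun k => beta k / t) => [k|]; first by apply: divr_ge0 => //; apply: ltW.
have -> : - E kk = t^-1 *: (- t *: E kk) by rewrite scalerA mulrN mulVf ?gt_eqF // scaleN1r.
rewrite bE scaler_sumr; apply: eq_bigr => k _; rewrite scalerA mulrC /masked.
by case tk' : (tA k) => //; rewrite bt ?tk' // mul0r !scale0r.
Qed.

Definition tight_mx : 'M[R]_(size e, d) := \matrix_(k, q) masked tA k 0 q.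

Lemma mul_tight_mx (a : 'rV[R]_(size e)) : a *m tight_mx = \sum_k a 0 k *: masked tA k.
Proof.
rewrite mulmx_sum_row; apply: eq_bigr => k _; congr (_ *: _).
by apply/rowP => q; rewrite !mxE.
Qed.

Lemma B_sub_tight_mx y : B y -> (y <= tight_mx)%MS.
Proof.
move=> /B_comb [beta [b0 bt] ->].
have -> : \sum_k beta k *: E k = (\row_k beta k) *m tight_mx.
  rewrite mul_tight_mx; apply: eq_bigr => k _; rewrite mxE /masked.
  by case tk : (tA k); rewrite // bt ?tk // !scale0r.
exact: submxMl.
Qed.

(* Write a small y in the span of the tight normals as sum_k a_k e_k with small
   a_k and add a positive dependence mu dominating |a|: the coefficients a + mu
   are nonnegative and sum to at most 1. *)
Lemma B_nbhd : pos_dependent tA ->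
  exists2 eps : R, 0 < eps & forall y, (y <= tight_mx)%MS -> ball 0 eps y -> B y.
Proof.
move=> [lam [lpos lz lsum]].
pose L := 2 * (1 + \sum_k lam k); pose mu k := lam k / L.
have lam0 k : 0 <= lam k by case tk : (tA k); [apply/ltW/lpos; rewrite tk|rewrite lz ?tk].
have L0 : 0 < L.
  have : 0 <= \sum_k lam k by apply: sumr_ge0 => k _.
  by rewrite /L; lra.
have mupos k : tA k -> 0 < mu k by move=> tk; rewrite divr_gt0 ?lpos.
have [m m0 mmin] := pos_lower_bound mupos.
have [C C0 Cbound] := mulmx_ball_bound (pinvmx tight_mx).
exists (m / C) => [|y yM yb]; first exact: divr_gt0.
pose a := y *m pinvmx tight_mx.
have am k : `|a 0 k| <= m.
  by have := Cbound y _ (ltW (divr_gt0 m0 C0)) yb k; rewrite mulrC divfK ?gt_eqF.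
pose beta k := if tA k then a 0 k + mu k else 0.
have -> : y = \sum_k beta k *: E k.
  rewrite -(mulmxKpV yM) mul_tight_mx -/a.
  transitivity (\sum_k (a 0 k *: masked tA k + L^-1 *: (lam k *: E k))).
    by rewrite big_split /= -scaler_sumr lsum scaler0 addr0.
  apply: eq_bigr => k _; rewrite /beta /masked /mu; case tk : (tA k).
    by rewrite scalerDl scalerA mulrC.
  by rewrite lz ?tk // !scale0r !scaler0 addr0.
apply: tight_comb_B.
  split => k; rewrite /beta; case tk : (tA k) => //.
  by have := am k; have := mmin k tk; rewrite ler_norml => ? /andP[? _]; lra.
apply: le_trans (_ : \sum_k 2 * mu k <= _).
  apply: ler_sum => k _; case tk : (tA k); rewrite /beta tk.
    by have := am k; have := mmin k tk; rewrite ler_norml => ? /andP[_ ?]; lra.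
  by rewrite mulr_ge0 ?divr_ge0 ?(ltW L0).
by rewrite -mulr_sumr -mulr_suml mulrA ler_pdivrMr // mul1r /L; lra.
Qed.

Lemma pos_dependent_relint_B : pos_dependent tA -> relint B 0.
Proof.
move=> dep; split; first exact: B0.
have [eps e0 Bnbhd] := B_nbhd dep; exists eps => // y /= [n [p [l [Bp [_ ->]]]]] yb.
apply: Bnbhd yb; apply: summx_sub => j _; apply: scalemx_sub; exact: B_sub_tight_mx.
Qed.

Lemma affdim_B : pos_dependent tA -> affdim B (\rank tight_mx).
Proof.
move=> dep; have [eps e0 Bnbhd] := B_nbhd dep.
apply: (affdim_nbhd (p := 0) e0) => [y yM yb|x y Bx By]; first by rewrite add0r; apply: Bnbhd.
apply: addmx_sub; first exact: B_sub_tight_mx.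
by rewrite -scaleN1r; apply/scalemx_sub/B_sub_tight_mx.
Qed.

Lemma sub_kermx_tight (v : vec) :
  (v <= kermx tight_mx^T)%MS <-> forall k, tA k -> <<v, E k>> = 0.
Proof.
rewrite sub_kermx; split=> [/eqP/matrixP vM k tk|vt].
  have := vM 0 k; rewrite !mxE => <-.
  by apply: eq_bigr => q _; rewrite !mxE /masked tk.
apply/eqP/matrixP => a k; rewrite !mxE (ord1 a).
under eq_bigr do rewrite !mxE /masked; case tk : (tA k); last first.
  by rewrite big1 // => q _; rewrite mxE mulr0.
by rewrite -[RHS](vt k tk).
Qed.

Lemma affdim_A : pos_dependent tA -> affdim A (\rank (kermx tight_mx^T)).
Proof.
move=> dep; have wA := Di_sub_A Dw.
have [eps e0 slack] := slack_nbhd A_halfspaces wA.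
apply: (affdim_nbhd (p := w) e0) => [y /sub_kermx_tight yt yb|x y Ax Ay].
  apply/A_halfspaces => k ke; have [kk <-] := facet_normalP ke.
  case tk : (tA kk); last first.
    apply/ltW/slack => [q|]; last by rewrite tk.
    by rewrite !mxE addrAC subrr add0r; have := yb q; rewrite mxE subr0.
  by rewrite pairingDl yt // addr0 (eqP tk).
apply/sub_kermx_tight => k tk.
have tight_eq := pos_dependent_tight_eq A_halfspaces dep.
by rewrite pairingBl (tight_eq _ Ax) ?(tight_eq _ Ay) ?subrr.
Qed.

End Tight.

Lemma face_relintE : lattice w -> w != 0 ->
  relint A w <-> Dzero D i w /\ relint B 0.
Proof.
move=> lw w0; split=> [Aint|[[Dw _] Bint]].
  have Dw := relint_A_Di lw Aint; split; first exact: D_Dzero.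
  exact/pos_dependent_relint_B/(relint_pos_dependent A_halfspaces Aint.1).
exact/(pos_dependent_relint A_halfspaces (Di_sub_A Dw))/relint_B_pos_dependent.
Qed.

Lemma face_affdim : lattice w -> relint A w ->
  exists n m : nat, affdim A n /\ affdim B m /\ (n + m)%N = d.
Proof.
move=> lw Aint; have Dw := relint_A_Di lw Aint.
have dep := relint_pos_dependent A_halfspaces Aint.1 Aint.
exists (\rank (kermx tight_mx^T)), (\rank tight_mx).
by rewrite mxrank_kermx_tr; split; [exact: affdim_A|split; [exact: affdim_B|]].
Qed.

End Face.
End NefPartition.

Unset Implicit Arguments.

Theorem mainTheorem15 (R : realType) (d : nat) (Delta : pset R d)
    (e : seq 'rV[R]_d) (r : nat) (D : 'I_r -> pset R d)
    (J : {set 'I_r}) (i : 'I_r) (w : 'rV[R]_d) :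
  reflexive_with_normals Delta e ->
  nef_partition Delta e D ->
  i \in J ->
  lattice w -> w != 0 ->
  let A := msum (D i :: [seq D j | j <- enum J]) in
  let B := msum [seq minface (nabla e D j) w | j <- enum (~: J)] in
  (relint A w <-> (Dzero D i w /\ relint B 0)) /\
  (relint A w -> exists n m : nat, affdim A n /\ affdim B m /\ (n + m)%N = d).
Proof.
move=> HR HN iJ lw w0 A B.
split; [exact: (face_relintE HR HN iJ lw w0)|exact: (face_affdim HR HN iJ lw)].
Qed.
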